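(* Consider unbounded homogeneous systems with error specifications, and for $k\in\mathbb{N}_{>0}$ the Horn constraints (H0)–(H4) described in the context. (1) If, for a given system and error specification, the constraints (H0)–(H4) are solvable for some $k$, then they are also solvable for every $k'>k$ (for the same system and error specification). (2) If $k'>k>0$, then there exist a system and error specification for which the constraints (H0)–(H4) are solvable for $k'$ but not solvable for $k$.
   Context: An unbounded homogeneous system consists of a non-empty global state space $G$, the process index set $P=\mathbb{N}$, a non-empty local state space $L$ (the same for all processes), a set of initial states $\mathit{Init}\subseteq G\times L$ (the same for all processes), and, for each process id $p\in\mathbb{N}$, a transition relation $(g,l)\stackrel{p}{\to}(g',l')$ on $G\times L$ (the behaviour may depend on the id $p$). System states are pairs $(g,\bar l)$ with $\bar l\in L^{\mathbb{N}}$; initial states are those with $(g,\bar l[p])\in\mathit{Init}$ for all $p$; the system transitions are $(g,\bar l)\to(g',\bar l[p/l'])$ whenever $(g,\bar l[p])\stackrel{p}{\to}(g',l')$, where $\bar l[p/l']$ replaces component $p$ by $l'$. An error specification is $(\langle p_1,E_1\rangle,\dots,\langle p_m,E_m\rangle)$ with pairwise distinct $p_j\in\mathbb{N}$ and $E_j\subseteq G\times L$; error states are $(g,\bar l)$ with $(g,\bar l[p_j])\in E_j$ for all $j$. For $k\ge 1$, the constraints are on a single relation $R\subseteq G\times(\mathbb{N}\times L)^k$; $\mathit{dist}(x_1,\dots,x_r)$ means the $x_i$ are pairwise distinct; for indices $a\le b$, $\mathit{RConj}(a,\dots,b)$ denotes $\bigwedge_{i_1<\dots<i_k,\ i_j\in\{a,\dots,b\}}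 R(g,q_{i_1},l_{i_1},\dots,q_{i_k},l_{i_k})$. All variables $g,g',q_i\in\mathbb{N},l_i,l_i'\in L$ are universally quantified: (H0) for every permutation $\sigma$ of $\{1,\dots,k\}$: $\mathit{dist}(q_1,\dots,q_k)\wedge R(g,q_1,l_1,\dots,q_k,l_k)\Rightarrow R(g,q_{\sigma(1)},l_{\sigma(1)},\dots,q_{\sigma(k)},l_{\sigma(k)})$; (H1) $\mathit{dist}(q_1,\dots,q_k)\wedge\mathit{Init}(g,l_1)\wedge\dots\wedge\mathit{Init}(g,l_k)\Rightarrow R(g,q_1,l_1,\dots,q_k,l_k)$; (H2) $\mathit{dist}(q_1,\dots,q_k)\wedge (g,l_1)\stackrel{q_1}{\to}(g',l_1')\wedge R(g,q_1,l_1,\dots,q_k,l_k)\Rightarrow R(g',q_1,l_1',q_2,l_2,\dots,q_k,l_k)$; (H3) $\mathit{dist}(q_0,q_1,\dots,q_k)\wedge (g,l_0)\stackrel{q_0}{\to}(g',l_0')\wedge\mathit{RConj}(0,\dots,k)\Rightarrow R(g',q_1,l_1,\dots,q_k,l_k)$; (H4) with $r=\max\{m,k\}$: $\mathit{dist}(q_1,\dots,q_r)\wedge\bigwedge_{j=1}^m\big(q_j=p_j\wedge(g,l_j)\in E_j\big)\wedge\mathit{RConj}(1,\dots,r)\Rightarrow\mathit{false}$. The constraints are solvable for $k$ if some relation $R$ makes all of (H0)–(H4) true. *)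

From mathcomp Require Import all_boot all_fingroup.
Set Implicit Arguments. Unset Strict Implicit. Unset Printing Implicit Defensive.

(* An unbounded homogeneous system: global states G, local states L (both
   non-empty), initial states Init ⊆ G × L, and for each process id p a
   transition relation (g,l) -p-> (g',l'), given as [trans p g l g' l']. *)
Record system := System {
  Gs : Type;
  Ls : Type;
  Gs_ne : inhabited Gs;
  Ls_ne : inhabited Ls;
  Init : Gs -> Ls -> Prop;
  trans : nat -> Gs -> Ls -> Gs -> Ls -> Prop
}.

(* An error specification (<p_1,E_1>,...,<p_m,E_m>) with pairwise distinct
   p_j; the index j ranges over 'I_m (0-based). *)
Record errspec (S : system) := ErrSpec {
  em : nat;
  ep : 'I_em -> nat;
  eE : 'I_em -> Gs S -> Ls S -> Prop;
  ep_inj : injective ep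
}.

(* A k-tuple (q_1,l_1,...,q_k,l_k) ∈ (N × L)^k is a function 'I_k -> nat * L. *)
Definition dist {n : nat} {L : Type} (x : 'I_n -> nat * L) : Prop :=
  injective (fun i => (x i).1).

Definition incr {k r : nat} (f : 'I_k -> 'I_r) : Prop :=
  forall i j : 'I_k, i < j -> f i < f j.

Definition RConj {G L : Type} {k r : nat}
  (R : G -> ('I_k -> nat * L) -> Prop) (g : G) (y : 'I_r -> nat * L) : Prop :=
  forall f : 'I_k -> 'I_r, incr f -> R g (fun j => y (f j)).

Section Constraints.
Variables (S : system) (E : errspec S) (k : nat).
Variable R : Gs S -> ('I_k -> nat * Ls S) -> Prop.

Definition H0 : Prop :=
  forall (g : Gs S) (x : 'I_k -> nat * Ls S) (s : 'S_k),
    dist x -> R g x -> R g (fun j => x (s j)).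

Definition H1 : Prop :=
  forall (g : Gs S) (x : 'I_k -> nat * Ls S),
    dist x -> (forall j, @Init S g (x j).2) -> R g x.

(* the first component (index 0, i.e. q_1) takes the step *)
Definition H2 : Prop :=
  forall (g g' : Gs S) (x : 'I_k -> nat * Ls S) (i0 : 'I_k) (l1' : Ls S),
    nat_of_ord i0 = 0 -> dist x ->
    @trans S (x i0).1 g (x i0).2 g' l1' -> R g x ->
    R g' (fun j => if j == i0 then ((x i0).1, l1') else x j).

(* variables q_0..q_k indexed by 'I_k.+1; q_0 takes the step *)
Definition H3 : Prop :=
  forall (g g' : Gs S) (y : 'I_k.+1 -> nat * Ls S) (l0' : Ls S),
    dist y -> @trans S (y ord0).1 g (y ord0).2 g' l0' -> RConj R g y ->
    R g' (fun j => y (lift ord0 j)).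

Definition H4 : Prop :=
  forall (g : Gs S) (y : 'I_(maxn (em E) k) -> nat * Ls S),
    dist y ->
    (forall j : 'I_(em E),
        (y (widen_ord (leq_maxl (em E) k) j)).1 = @ep S E j /\
        @eE S E j g (y (widen_ord (leq_maxl (em E) k) j)).2) ->
    RConj R g y -> False.

End Constraints.

Definition solvable (S : system) (E : errspec S) (k : nat) : Prop :=
  exists R : Gs S -> ('I_k -> nat * Ls S) -> Prop,
    H0 R /\ H1 R /\ H2 R /\ H3 R /\ H4 E R.

(** (1) If R solves the constraints for k, then the relation holding of a
   k'-tuple exactly when R holds of each of its k-element subtuples, in every
   order, solves them for k'.  A step of a tracked process is either a step of
   a process of the subtuple (H0 and H2) or a step of a process outside it;
   in the latter case the process together with the subtuple is a
   (k+1)-element subtuple, all of whose k-element subtuples satisfy R, so H3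
   applies.

   (2) In the counter system with bound K every process may once increment a
   global counter bounded by K, and an error needs K+1 processes to have
   stepped.  For k = K+1 the invariant "counter <= K and the number of tracked
   processes that stepped is <= counter" is inductive.  For k = K, H0-H2 force
   R to hold of every K-tuple whose number of stepped processes equals the
   counter, hence of every K-subtuple of the error configuration with counter
   K, contradicting H4. *)

From mathcomp Require Import all_boot all_order all_fingroup.
From Stdlib Require Import FunctionalExtensionality.
Set Implicit Arguments. Unset Strict Implicit. Unset Printing Implicit Defensive.
Import Order.TTheory.

Lemma exists_supset_card (T : finType) (A0 : {set T}) j :
  #|A0| <= j <= #|T| -> exists2 A : {set T}, A0 \subset A & #|A| = j.
Proof.
elim: j => [|j IHj]; first by rewrite leqn0 => /andP[/eqP <- _]; exists A0.
case/andP; rewrite leq_eqVlt => /orP[/eqP <- _|le_A0j lt_jT]; first by exists A0.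
have [A sA0A cardA] : exists2 A : {set T}, A0 \subset A & #|A| = j.
  by apply: IHj; rewrite -ltnS le_A0j ltnW.
have /card_gt0P[x] : 0 < #|~: A|.
  by move: lt_jT; rewrite -(cardsC A) cardA -{1}[j]addn0 ltn_add2l.
rewrite in_setC => xNA; exists (x |: A); first exact: subset_trans (subsetUr _ _).
by rewrite cardsU1 xNA cardA.
Qed.

Lemma incr_inj k r (f : 'I_k -> 'I_r) : incr f -> injective f.
Proof.
by move=> incr_f i j fij; case: (ltngtP i j) => [/incr_f|/incr_f|/val_inj];
  rewrite ?fij ?ltnn.
Qed.

(* F enumerates increasingly a k'-element superset of the image of e. *)
Lemma inj_factor_incr k k' n (e : 'I_k -> 'I_n) : injective e -> k <= k' <= n ->
  exists2 F : 'I_k' -> 'I_n, incr F &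
    exists2 f : 'I_k -> 'I_k', injective f & forall i, e i = F (f i).
Proof.
move=> inj_e /andP[le_kk' le_k'n].
have [A sEA cardA] : exists2 A : {set 'I_n}, e @: setT \subset A & #|A| = k'.
  by apply: exists_supset_card; rewrite card_imset // cardsT !card_ord le_kk'.
have eA i : e i \in A by apply: (subsetP sEA); apply: imset_f.
pose F i := Order.enum_val (cast_ord (esym cardA) i).
pose f i := cast_ord cardA (Order.enum_rank_in (eA i) (e i)).
have eF i : e i = F (f i) by rewrite /F /f cast_ordK Order.enum_rankK_in.
exists F => [i j lt_ij|]; last by exists f => // i j /(congr1 F); rewrite -!eF => /inj_e.
have := leW_mono (@Order.le_enum_val _ 'I_n (@le_total _ 'I_n) (mem A)).
by move=> /(_ (cast_ord (esym cardA) i) (cast_ord (esym cardA) j)); rewrite !ltEord => ->.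
Qed.

Definition ord_cons n m (a : 'I_m) (f : 'I_n -> 'I_m) (i : 'I_n.+1) : 'I_m :=
  if unlift ord0 i is Some j then f j else a.

Lemma ord_cons0 n m (a : 'I_m) (f : 'I_n -> 'I_m) : ord_cons a f ord0 = a.
Proof. by rewrite /ord_cons unlift_none. Qed.

Lemma ord_consS n m (a : 'I_m) (f : 'I_n -> 'I_m) j : ord_cons a f (lift ord0 j) = f j.
Proof. by rewrite /ord_cons liftK. Qed.

Lemma ord_cons_inj n m (a : 'I_m) (f : 'I_n -> 'I_m) :
  injective f -> (forall j, f j != a) -> injective (ord_cons a f).
Proof.
move=> inj_f fNa i1 i2.
case: (unliftP ord0 i1) => [j1 ->|->]; case: (unliftP ord0 i2) => [j2 ->|->];
  rewrite ?ord_consS ?ord_cons0 //.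
- by move/inj_f ->.
- by move=> fj1; have := fNa j1; rewrite fj1 eqxx.
- by move=> fj2; have := fNa j2; rewrite -fj2 eqxx.
Qed.

Lemma incr_lift0 n : incr (lift (@ord0 n)).
Proof. by move=> i j; rewrite /= /bump !add1n. Qed.

Lemma incr_widen_ord n m (le_nm : n <= m) : incr (widen_ord le_nm).
Proof. by []. Qed.

Lemma widen_ord_inj n m (le_nm : n <= m) : injective (widen_ord le_nm).
Proof. by move=> i j /(congr1 val) /= /val_inj. Qed.

Definition set_local L n (x : 'I_n -> nat * L) (i : 'I_n) (l : L) : 'I_n -> nat * L :=
  fun j => if j == i then ((x i).1, l) else x j.

Section Tuples.
Variable L : Type.
Implicit Type l : L.

Lemma dist_comp n m (x : 'I_n -> nat * L) (f : 'I_m -> 'I_n) :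
  dist x -> injective f -> dist (fun j => x (f j)).
Proof. by move=> dx inj_f i j /dx /inj_f. Qed.

Lemma dist_set_local n (x : 'I_n -> nat * L) i l : dist x -> dist (set_local x i l).
Proof.
rewrite /dist /set_local => dx a b.
by case: eqP => [->|_]; case: eqP => [->|_] //= /dx.
Qed.

Lemma set_local_comp n m (x : 'I_n -> nat * L) (f : 'I_m -> 'I_n) i l :
  injective f -> (fun j => set_local x (f i) l (f j)) = set_local (fun j => x (f j)) i l.
Proof.
by move=> inj_f; apply: functional_extensionality => j; rewrite /set_local (inj_eq inj_f).
Qed.

Lemma set_local_set_local n (x : 'I_n -> nat * L) i l l' :
  set_local (set_local x i l) i l' = set_local x i l'.
Proof. by apply: functional_extensionality => j; rewrite /set_local eqxx; case: eqP. Qed.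

Lemma set_local_id n (x : 'I_n -> nat * L) i : set_local x i (x i).2 = x.
Proof.
apply: functional_extensionality => j; rewrite /set_local.
by case: eqP => [->|//]; rewrite -surjective_pairing.
Qed.

End Tuples.

Section StepAnywhere.
Variables (S : system) (k : nat) (R : Gs S -> ('I_k -> nat * Ls S) -> Prop).
Hypotheses (R0 : H0 R) (R2 : H2 R).

Lemma H0_perm g (x : 'I_k -> nat * Ls S) (s : 'S_k) :
  dist x -> R g (fun j => x (s j)) -> R g x.
Proof.
move=> dx /(R0 s^-1%g (dist_comp dx perm_inj)).
suff -> : (fun j => x (s (s^-1%g j))) = x by [].
by apply: functional_extensionality => j; rewrite permKV.
Qed.

(* H2 only lets the first component step; H0 moves any component there. *)
Lemma H2_anywhere g g' (x : 'I_k -> nat * Ls S) i l' :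
  dist x -> trans (x i).1 g (x i).2 g' l' -> R g x -> R g' (set_local x i l').
Proof.
move=> dx step Rx; pose z : 'I_k := Ordinal (leq_ltn_trans (leq0n i) (ltn_ord i)).
pose s := tperm i z; apply: (H0_perm (s := s)); first exact: dist_set_local.
rewrite -[in set_local x i](tpermR i z) (set_local_comp _ _ _ perm_inj).
apply: (R2 (g := g)) => //; first exact: dist_comp dx perm_inj.
  by rewrite tpermR.
exact: R0.
Qed.

End StepAnywhere.

Definition on_subtuples G L k k' (R : G -> ('I_k -> nat * L) -> Prop)
    (g : G) (x : 'I_k' -> nat * L) : Prop :=
  forall f : 'I_k -> 'I_k', injective f -> R g (fun j => x (f j)).

Section Subtuples.
Variables (G L : Type) (k : nat) (R : G -> ('I_k -> nat * L) -> Prop).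

Lemma on_subtuples_comp r r' g (y : 'I_r -> nat * L) (h : 'I_r' -> 'I_r) :
  on_subtuples R g y -> injective h -> on_subtuples R g (fun i => y (h i)).
Proof. by move=> Ry inj_h f inj_f; apply: Ry; apply: inj_comp. Qed.

Lemma on_subtuples_RConj r g (y : 'I_r -> nat * L) :
  on_subtuples R g y -> RConj R g y.
Proof. by move=> Ry f /incr_inj; apply: Ry. Qed.

Lemma RConj_on_subtuples k' r g (y : 'I_r -> nat * L) : k <= k' <= r ->
  RConj (@on_subtuples G L k k' R) g y -> on_subtuples R g y.
Proof.
move=> le_kk'r RCy e inj_e.
have [F incr_F [f inj_f eF]] := inj_factor_incr inj_e le_kk'r.
have -> : (fun j => y (e j)) = (fun j => y (F (f j))).
  by apply: functional_extensionality => j; rewrite eF.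
exact: RCy.
Qed.

End Subtuples.

Section Monotone.
Variables (S : system) (E : errspec S) (k k' : nat).
Variable R : Gs S -> ('I_k -> nat * Ls S) -> Prop.
Hypothesis le_kk' : k <= k'.
Hypotheses (R0 : H0 R) (R1 : H1 R) (R2 : H2 R) (R3 : H3 R) (R4 : H4 E R).

Lemma on_subtuples_H0 : @H0 S k' (on_subtuples R).
Proof. by move=> g x s _ Rx; apply: on_subtuples_comp Rx perm_inj. Qed.

Lemma on_subtuples_H1 : @H1 S k' (on_subtuples R).
Proof. by move=> g x dx init f inj_f; apply: R1 => //; apply: dist_comp. Qed.

Lemma on_subtuples_H2 : @H2 S k' (on_subtuples R).
Proof.
move=> g g' x i0 l' _ dx step Rx f inj_f.
change (R g' (fun j => set_local x i0 l' (f j))).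
case: (pickP (fun j => f j == i0)) => [j /eqP fj|fNi0].
  rewrite -fj (set_local_comp _ _ _ inj_f).
  by apply: (H2_anywhere R0 R2 (dist_comp dx inj_f) _ (Rx f inj_f)); rewrite fj.
have inj_h : injective (ord_cons i0 f) by apply: ord_cons_inj => // j; rewrite fNi0.
have -> : (fun j => set_local x i0 l' (f j)) = (fun j => x (ord_cons i0 f (lift ord0 j))).
  by apply: functional_extensionality => j; rewrite ord_consS /set_local fNi0.
apply: (R3 (g := g) (l0' := l') (dist_comp dx inj_h)); first by rewrite ord_cons0.
exact: on_subtuples_RConj (on_subtuples_comp Rx inj_h).
Qed.

Lemma on_subtuples_H3 : @H3 S k' (on_subtuples R).
Proof.
move=> g g' y l' dy step RCy f inj_f.
pose h := ord_cons ord0 (fun j => lift ord0 (f j)).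
have inj_h : injective h.
  apply: ord_cons_inj => [|j]; last by rewrite eq_sym neq_lift.
  exact: inj_comp (@lift_inj _ ord0) inj_f.
have Ry : on_subtuples R g y by apply: RConj_on_subtuples RCy; rewrite le_kk' leqnSn.
change (R g' (fun j => y (lift ord0 (f j)))).
have -> : (fun j => y (lift ord0 (f j))) = (fun j => y (h (lift ord0 j))).
  by apply: functional_extensionality => j; rewrite /h ord_consS.
apply: (R3 (g := g) (l0' := l') (dist_comp dy inj_h)); first by rewrite /h ord_cons0.
exact: on_subtuples_RConj (on_subtuples_comp Ry inj_h).
Qed.

Lemma on_subtuples_H4 : @H4 S E k' (on_subtuples R).
Proof.
move=> g y dy err RCy.
have le_r : maxn (em E) k <= maxn (em E) k'.
  by rewrite geq_max leq_maxl (leq_trans le_kk' (leq_maxr _ _)).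
have Ry : on_subtuples R g y by apply: RConj_on_subtuples RCy; rewrite le_kk' leq_maxr.
apply: (R4 (dist_comp dy (widen_ord_inj (le_nm := le_r)))) => [j|].
  by rewrite (_ : widen_ord _ _ = widen_ord (leq_maxl (em E) k') j) //; apply: ord_inj.
exact: on_subtuples_RConj (on_subtuples_comp Ry (widen_ord_inj (le_nm := le_r))).
Qed.

End Monotone.

Lemma solvable_le (S : system) (E : errspec S) k k' :
  k <= k' -> solvable E k -> solvable E k'.
Proof.
move=> le_kk' [R [R0 [R1 [R2 [R3 R4]]]]]; exists (on_subtuples R).
split; first exact: on_subtuples_H0.
split; first exact: on_subtuples_H1.
split; first exact: on_subtuples_H2.
split; first exact: on_subtuples_H3.
exact: on_subtuples_H4.
Qed.

(* Local state [true] means that the process has made its unique step. *)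
Definition counter_system (K : nat) : system :=
  @System nat bool (inhabits 0) (inhabits false)
    (fun g l => g = 0 /\ l = false)
    (fun _ g l g' l' => [/\ l = false, l' = true, g < K & g' = g.+1]).

Definition counter_errspec (K : nat) : errspec (counter_system K) :=
  @ErrSpec (counter_system K) K.+1 val (fun _ _ l => l) val_inj.

Definition ndone n (x : 'I_n -> nat * bool) : nat := \sum_(i < n) (x i).2.

Lemma ndone_perm n (x : 'I_n -> nat * bool) (s : 'S_n) :
  ndone (fun j => x (s j)) = ndone x.
Proof. by rewrite /ndone [RHS](reindex_inj (@perm_inj _ s)). Qed.

Lemma ndone_set_local n (x : 'I_n -> nat * bool) i b :
  ndone (set_local x i b) + (x i).2 = ndone x + b.
Proof.
rewrite /ndone (bigD1 i) // [in RHS](bigD1 i) //= /set_local eqxx /=.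
rewrite (eq_bigr (fun j => nat_of_bool (x j).2)) => [|j /negbTE -> //].
by rewrite addnC addnCA addnC.
Qed.

Lemma ndone_eq0 n (x : 'I_n -> nat * bool) : ndone x = 0 -> forall i, (x i).2 = false.
Proof.
by move/eqP; rewrite sum_nat_eq0 => /forallP all0 i; move: (all0 i); case: (x i).2.
Qed.

Lemma ndone_all n (x : 'I_n -> nat * bool) : (forall i, (x i).2) -> ndone x = n.
Proof.
move=> all_done; rewrite /ndone (eq_bigr (fun=> 1)) => [|i _]; last by rewrite all_done.
by rewrite sum1_card card_ord.
Qed.

Section Counter.
Variables (K k : nat) (R : Gs (counter_system K) -> ('I_k -> nat * bool) -> Prop).
Hypotheses (R0 : H0 R) (R1 : H1 R) (R2 : H2 R).

Lemma counter_rel_ndone g (x : 'I_k -> nat * bool) :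
  g <= K -> dist x -> ndone x = g -> R g x.
Proof.
elim: g x => [|g IHg] x le_gK dx ndone_x.
  by apply: R1 => // j; split => //; apply: ndone_eq0.
have [i done_i|] := pickP (fun i => (x i).2); last first.
  by move=> none; move: ndone_x; rewrite /ndone big1 // => i _; rewrite none.
pose x0 := set_local x i false; have dx0 : dist x0 by apply: dist_set_local.
have ndone_x0 : ndone x0 = g.
  by move: (ndone_set_local x i false); rewrite done_i addn0 addn1 ndone_x => /succn_inj.
have step : @trans (counter_system K) (x0 i).1 g (x0 i).2 g.+1 true.
  by rewrite /x0 /set_local eqxx.
have := H2_anywhere R0 R2 dx0 step (IHg _ (ltnW le_gK) dx0 ndone_x0).
by rewrite /x0 set_local_set_local -done_i set_local_id.
Qed.

End Counter.

Lemma counter_solvable K : solvable (counter_errspec K) K.+1.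
Proof.
exists (fun g (x : 'I_K.+1 -> nat * bool) => g <= K /\ ndone x <= g).
split; last split; last split; last split.
- by move=> g x s _ [le_gK]; rewrite ndone_perm.
- move=> g x _ init; have [-> _] := init ord0; split => //.
  by rewrite /ndone big1 // => i _; have [_ ->] := init i.
- move=> g _ x i l' _ _ [xi -> lt_gK ->] [_ le_ng]; split => //.
  change (ndone (set_local x i true) <= g.+1).
  by have := ndone_set_local x i true; rewrite xi addn0 addn1 => ->.
- move=> g _ y l' _ [_ _ lt_gK ->] RCy; split=> //.
  by have [_ /leqW] := RCy _ (@incr_lift0 K.+1).
- move=> g y _ err RCy.
  have [le_gK] := RCy _ (incr_widen_ord (leq_maxl K.+1 K.+1)).
  rewrite ndone_all; last by move=> i; have [] := err i.
  by rewrite ltnNge le_gK.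
Qed.

Lemma counter_unsolvable K : ~ solvable (counter_errspec K) K.
Proof.
move=> [R [R0 [R1 [R2 [_ R4]]]]].
apply: (R4 K (fun i => (val i, true))) => // [i j /val_inj //|e incr_e].
apply: counter_rel_ndone => //; last exact: ndone_all.
by move=> i j /val_inj /(incr_inj incr_e).
Qed.

Theorem theorem1 :
  (forall (S : system) (E : errspec S) (k k' : nat),
      0 < k -> k < k' -> solvable E k -> solvable E k') /\
  (forall k k' : nat, 0 < k -> k < k' ->
      exists (S : system) (E : errspec S), solvable E k' /\ ~ solvable E k).
Proof.
split=> [S E k k' _ /ltnW|k k' _ lt_kk']; first exact: solvable_le.
exists (counter_system k), (counter_errspec k); split; last exact: counter_unsolvable.
exact: solvable_le lt_kk' (counter_solvable k).
Qed.
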